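(* Let $k>0$ be real, let $M=\begin{bmatrix} k-1 & k-1 & k\\ 1&0&0\\ 0&1&0\end{bmatrix}$ and $N_0=\begin{bmatrix} k-1 & 2k & 2k\\ 2 & 1-k & 2\\ \frac{2}{k} & \frac{2}{k} & -\frac{1}{k}(k^2+k-2)\end{bmatrix}$. For integers $n\ge1$ put $\mathbf{j}_n=N_0M^n$, and define $$\mathbf{j}_{-n}=\begin{bmatrix} j_{-(n-1)} & t_{-(n+1)} & kj_{-n}\\ j_{-n} & t_{-(n+2)} & kj_{-(n+1)}\\ j_{-(n+1)} & t_{-(n+3)} & kj_{-(n+2)}\end{bmatrix},$$ where $t_{-m}=(k-1)j_{-(m-1)}+kj_{-m}$ for every integer $m$. Then for every integer $n\ge1$, $$\mathbf{j}_{-n}=M^{-n}N_0=N_0M^{-n}\qquad\text{and}\qquad \left(\mathbf{j}_n\right)^{-1}=N_0^{-1}\,\mathbf{j}_{-n}\,N_0^{-1}.$$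
   Context: For real $k>0$, the third-order $k$-Jacobsthal--Lucas sequence $(j_n)$ is defined by $j_0=2$, $j_1=k-1$, $j_2=k^2+1$ and $j_{n+3}=(k-1)j_{n+2}+(k-1)j_{n+1}+kj_n$, and extended to negative indices by the backward recurrence $j_{-n}=\frac{1-k}{k}j_{-(n-1)}+\frac{1-k}{k}j_{-(n-2)}+\frac{1}{k}j_{-(n-3)}$ for $n\ge1$. *)

From HB Require Import structures.
From mathcomp Require Import all_boot all_order all_algebra.
Set Implicit Arguments. Unset Strict Implicit. Unset Printing Implicit Defensive.
Import Order.TTheory GRing.Theory Num.Theory.
Local Open Scope ring_scope.

Section JL.
Variable R : realFieldType.
Variable k : R.

Fixpoint jpos (n : nat) : R :=
  match n with
  | 0 => 2
  | 1 => k - 1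
  | 2 => k ^+ 2 + 1
  | ((a.+1 as b).+1 as c).+1 =>
      (k - 1) * jpos c + (k - 1) * jpos b + k * jpos a
  end.

Fixpoint jneg (n : nat) : R :=
  match n with
  | 0 => 2
  | 1 => (1 - k) / k * jpos 0 + (1 - k) / k * jpos 1 + 1 / k * jpos 2
  | (0.+1 as b).+1 => (1 - k) / k * jneg b + (1 - k) / k * jpos 0 + 1 / k * jpos 1
  | ((a.+1 as b).+1 as c).+1 =>
      (1 - k) / k * jneg c + (1 - k) / k * jneg b + 1 / k * jneg a
  end.

Definition jz (z : int) : R :=
  match z with
  | Posz n => jpos n
  | Negz n => jneg n.+1
  end.

Definition tneg (m : int) : R := (k - 1) * jz (- (m - 1)) + k * jz (- m).

Definition mx3 (a b c d e f g h i : R) : 'M[R]_3 :=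
  \matrix_(r < 3, s < 3)
    nth 0 (nth [::] [:: [:: a; b; c]; [:: d; e; f]; [:: g; h; i]] r) s.

Definition Mk : 'M[R]_3 := mx3 (k - 1) (k - 1) k  1 0 0  0 1 0.

Definition N0 : 'M[R]_3 :=
  mx3 (k - 1) (2 * k) (2 * k)
      2 (1 - k) 2
      (2 / k) (2 / k) (- (1 / k) * (k ^+ 2 + k - 2)).

Definition jmx_pos (n : nat) : 'M[R]_3 := N0 *m (Mk ^+ n).

Definition jmx_neg (n : nat) : 'M[R]_3 :=
  let z := n%:Z in
  mx3 (jz (- (z - 1))) (tneg (z + 1)) (k * jz (- z))
      (jz (- z))       (tneg (z + 2)) (k * jz (- (z + 1)))
      (jz (- (z + 1))) (tneg (z + 3)) (k * jz (- (z + 2))).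

End JL.

From HB Require Import structures.
From mathcomp Require Import all_boot all_order all_algebra.
From mathcomp Require Import ring zify.
Import Order.TTheory GRing.Theory Num.Theory.
Local Open Scope ring_scope.

(* The first row of M turns the backward recurrence into M j_{-(n+1)} = j_{-n};
   together with M j_{-1} = N0 this gives M^n j_{-n} = N0.  Both M (determinant k)
   and N0 (determinant (k+1)^2 (k^2+k+2)/k) are invertible for k > 0 and they
   commute, so the three identities are formal consequences in the matrix ring. *)

Lemma comm_unit_quotient (V : unitRingType) (a b g : V) :
  a \is a GRing.unit -> b \is a GRing.unit -> GRing.comm a b -> b * g = a ->
  [/\ g = b^-1 * a, g = a * b^-1 & (a * b)^-1 = a^-1 * g * a^-1].
Proof.
move=> Ua Ub ab bg_a.
have g_def : g = b^-1 * a by rewrite -bg_a mulKr.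
have ab' : GRing.comm a b^-1 by apply: commrV.
split=> //; first by rewrite g_def ab'.
by rewrite g_def -ab' mulKr // invrM.
Qed.

Section Mx3.
Variable R : realFieldType.

Lemma mul_mx3 (a b c d e f g h i a' b' c' d' e' f' g' h' i' : R) :
  mx3 a b c d e f g h i *m mx3 a' b' c' d' e' f' g' h' i' =
  mx3 (a * a' + b * d' + c * g') (a * b' + b * e' + c * h') (a * c' + b * f' + c * i')
      (d * a' + e * d' + f * g') (d * b' + e * e' + f * h') (d * c' + e * f' + f * i')
      (g * a' + h * d' + i * g') (g * b' + h * e' + i * h') (g * c' + h * f' + i * i').
Proof.
apply/matrixP => r s; rewrite !mxE !big_ord_recr big_ord0 /= !mxE /=.
by case: r => [[|[|[|r]]] Hr] //=; case: s => [[|[|[|s]]] Hs] //=; rewrite add0r.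
Qed.

Lemma det_mx3 (a b c d e f g h i : R) :
  \det (mx3 a b c d e f g h i) =
  a * (e * i - f * h) - b * (d * i - f * g) + c * (d * h - e * g).
Proof.
rewrite (expand_det_row _ 0) !big_ord_recr big_ord0 /cofactor /=.
rewrite !(expand_det_row _ 0) !big_ord_recr big_ord0 /cofactor /= !det_mx11 !mxE /=.
by rewrite !big_ord0 /=; ring.
Qed.

End Mx3.

Section JacobsthalLucasMatrices.
Variable R : realFieldType.
Variable k : R.
Hypothesis k_gt0 : 0 < k.

Let k_neq0 : k != 0. Proof. by rewrite gt_eqF. Qed.

Lemma jneg_rec a :
  jneg k a.+3 = (1 - k) / k * jneg k a.+2 + (1 - k) / k * jneg k a.+1 + 1 / k * jneg k a.
Proof. by []. Qed.

Lemma jz_oppz (p : nat) : jz k (- p%:Z) = jneg k p.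
Proof. by case: p. Qed.

Lemma jmx_negSE m : jmx_neg k m.+1 =
  mx3 (jneg k m) ((k - 1) * jneg k m.+1 + k * jneg k m.+2) (k * jneg k m.+1)
      (jneg k m.+1) ((k - 1) * jneg k m.+2 + k * jneg k m.+3) (k * jneg k m.+2)
      (jneg k m.+2) ((k - 1) * jneg k m.+3 + k * jneg k m.+4) (k * jneg k m.+3).
Proof.
rewrite /jmx_neg /tneg.
have -> : Posz m.+1 - 1 = m by lia.
have -> : Posz m.+1 + 1 - 1 = m.+1 by lia.
have -> : Posz m.+1 + 2 - 1 = m.+2 by lia.
have -> : Posz m.+1 + 3 - 1 = m.+3 by lia.
have -> : Posz m.+1 + 1 = m.+2 by lia.
have -> : Posz m.+1 + 2 = m.+3 by lia.
have -> : Posz m.+1 + 3 = m.+4 by lia.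
by rewrite !jz_oppz.
Qed.

Lemma Mk_mul_jmx_neg1 : Mk k *m jmx_neg k 1 = N0 k.
Proof.
rewrite jmx_negSE /Mk /N0 mul_mx3 (jneg_rec 1) (jneg_rec 0) /=.
by congr mx3; field.
Qed.

Lemma Mk_mul_jmx_negSS m : Mk k *m jmx_neg k m.+2 = jmx_neg k m.+1.
Proof.
rewrite !jmx_negSE /Mk mul_mx3 (jneg_rec m.+2) (jneg_rec m.+1) (jneg_rec m).
by congr mx3; field.
Qed.

Lemma Mk_exp_mul_jmx_neg m : Mk k ^+ m.+1 *m jmx_neg k m.+1 = N0 k.
Proof.
elim: m => [|m IHm]; first by rewrite expr1 Mk_mul_jmx_neg1.
by rewrite exprSr -mulmxA Mk_mul_jmx_negSS.
Qed.

Lemma N0_Mk_comm : N0 k *m Mk k = Mk k *m N0 k.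
Proof. by rewrite /N0 /Mk !mul_mx3; congr mx3; field. Qed.

Lemma det_Mk : \det (Mk k) = k.
Proof. by rewrite det_mx3; ring. Qed.

Lemma det_N0 : \det (N0 k) = (k + 1) ^+ 2 * (k ^+ 2 + k + 2) / k.
Proof. by rewrite det_mx3; field. Qed.

Lemma unitmx_Mk : Mk k \in unitmx.
Proof. by rewrite unitmxE det_Mk unitfE. Qed.

Lemma unitmx_N0 : N0 k \in unitmx.
Proof.
rewrite unitmxE det_N0 unitfE gt_eqF // divr_gt0 // mulr_gt0 ?exprn_gt0 //.
  by rewrite addr_gt0.
by rewrite !addr_gt0 ?exprn_gt0.
Qed.

End JacobsthalLucasMatrices.

Theorem mainTheorem11 (R : realFieldType) (k : R) (hk : 0 < k) (n : nat)
  (hn : (1 <= n)%N) :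
  [/\ jmx_neg k n = invmx (Mk k ^+ n) *m N0 k,
      jmx_neg k n = N0 k *m invmx (Mk k ^+ n)
    & invmx (jmx_pos k n) = invmx (N0 k) *m jmx_neg k n *m invmx (N0 k)].
Proof.
case: n hn => // m _.
(* On 'M_3, [invmx] and [*m] are by definition the unit-ring inverse and product. *)
apply: comm_unit_quotient.
- exact: unitmx_N0.
- exact/unitrX/unitmx_Mk.
- exact/commrX/N0_Mk_comm.
- exact: Mk_exp_mul_jmx_neg.
Qed.
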